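(* Each of the two cyclic Steiner triple systems of order $15$ on $\mathbb{Z}_{15}$, namely the one generated (under $i\mapsto i+1 \bmod 15$) by the base blocks $\{0,1,4\},\{0,2,8\},\{0,5,10\}$ and the one generated by the base blocks $\{0,1,4\},\{0,2,9\},\{0,5,10\}$, admits a zero-sum $3$-flow.
   Context: The blocks of the system generated by base blocks are all translates $\{a+i,b+i,c+i\}$ (mod 15) of the base blocks; the base block $\{0,5,10\}$ generates only 5 distinct blocks. For a design $(X,\mathcal{B})$, a zero-sum $3$-flow is a map $f:\mathcal{B}\to\{\pm1,\pm2\}$ such that $\sum_{B\ni x} f(B)=0$ for every point $x\in X$. *)

From mathcomp Require Import all_boot all_order all_algebra.
Set Implicit Arguments. Unset Strict Implicit. Unset Printing Implicit Defensive.
Import GRing.Theory Num.Theory.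
Local Open Scope ring_scope.

Definition Z15 := 'Z_15.

Definition translate (B : {set Z15}) (i : Z15) : {set Z15} :=
  [set x + i | x in B].

(* The block set generated by a list of base blocks under i |-> i+1 mod 15:
   all distinct translates of all base blocks (as a set, so e.g. {0,5,10}
   contributes only 5 distinct blocks). *)
Definition cyclic_blocks (base : seq {set Z15}) : {set {set Z15}} :=
  \bigcup_(B <- base) [set translate B i | i : Z15].

Definition zero_sum_3flow (T : finType) (blocks : {set {set T}}) : Prop :=
  exists f : {set T} -> int,
    (forall B, B \in blocks -> f B \in [:: 1; -1; 2; -2]) /\
    (forall x : T, \sum_(B in blocks | x \in B) f B = 0).

Definition STS15_A : {set {set Z15}} :=
  cyclic_blocks [:: [set 0; 1; 4]; [set 0; 2; 8]; [set 0; 5; 10]].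
Definition STS15_B : {set {set Z15}} :=
  cyclic_blocks [:: [set 0; 1; 4]; [set 0; 2; 9]; [set 0; 5; 10]].

From mathcomp Require Import all_boot all_order all_algebra zify.
Set Implicit Arguments. Unset Strict Implicit. Unset Printing Implicit Defensive.
Import GRing.Theory Num.Theory.
Local Open Scope ring_scope.

(* Both cyclic STS(15) carry an explicit zero-sum 3-flow; the proof certifies
   given weights. *)

Section FlowFromEnumeration.
Variables (T I : finType) (blk : I -> {set T}) (w : I -> int).
Hypothesis blk_inj : injective blk.

Lemma flow_of_enumeration :
  (forall k, w k \in [:: 1; -1; 2; -2]) ->
  (forall x, \sum_(k | x \in blk k) w k = 0) ->
  zero_sum_3flow [set blk k | k : I].
Proof.
move=> w_range w_balanced.
pose f B := if [pick k | blk k == B] is Some k then w k else 0.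
have f_blk k : f (blk k) = w k.
  by rewrite /f; case: pickP => [j /eqP/blk_inj -> // | /(_ k)]; rewrite eqxx.
exists f; split=> [_ /imsetP [k _ ->] | x]; first by rewrite f_blk.
rewrite big_mkcondr big_imset /=; last by move=> j k _ _ /blk_inj.
apply: etrans (w_balanced x); rewrite [RHS]big_mkcond.
by apply: eq_bigr => k _; rewrite f_blk.
Qed.

End FlowFromEnumeration.

Lemma mem_translate (B : {set Z15}) (i x : Z15) :
  (x \in translate B i) = (x - i \in B).
Proof.
apply/imsetP/idP => [[y yB ->]|xiB]; first by rewrite addrK.
by exists (x - i); rewrite ?subrK.
Qed.

Lemma translateD (B : {set Z15}) (i j : Z15) :
  translate B (i + j) = translate (translate B i) j.
Proof. by apply/setP => x; rewrite !mem_translate opprD addrA addrAC. Qed.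

Lemma translate_periodic (B : {set Z15}) (d i : Z15) (m : nat) :
  translate B d = B -> translate B (i + d *+ m) = translate B i.
Proof.
move=> Bd; elim: m => [|m IHm]; first by rewrite addr0.
by rewrite mulrS addrCA translateD Bd.
Qed.

Lemma translate_mod (B : {set Z15}) (d : nat) (i : Z15) :
  translate B d%:R = B -> translate B i = translate B (i %% d)%:R.
Proof.
move=> Bd; rewrite -[in LHS](natr_Zp i) {1}(divn_eq i d) natrD addrC.
by rewrite natrM mulr_natl translate_periodic.
Qed.

(* Invariance under translation by d, checked on a list of the block: by
   counting, closure under +d already gives equality. *)
Lemma translate_invariant (s : seq Z15) (d : Z15) :
  all (fun y => y + d \in s) s -> translate [set y in s] d = [set y in s].
Proof.
move=> /allP s_d; apply/eqP; rewrite eqEcard card_imset; last exact: addIr.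
rewrite leqnn andbT; apply/subsetP => x; rewrite mem_translate !inE => /s_d.
by rewrite subrK.
Qed.

Definition points : seq Z15 := [seq i%:R | i <- iota 0 15].

Lemma mem_points (x : Z15) : x \in points.
Proof. by rewrite -(natr_Zp x); apply: map_f; rewrite mem_iota /=. Qed.

Lemma mem_iota_ord (n : nat) (k : 'I_n) : val k \in iota 0 n.
Proof. by rewrite mem_iota /=. Qed.

Section CyclicSTS15.
Variables s1 s2 s3 : seq Z15.

Definition base_set (j : nat) : {set Z15} := [set y in nth [::] [:: s1; s2; s3] j].

(* Block number k = 15 * j + i is the translate of base block j by i. *)
Definition enum_block (k : nat) : {set Z15} := translate (base_set (k %/ 15)) k%:R.

Definition in_block (k : nat) (x : Z15) : bool :=
  x - k%:R \in nth [::] [:: s1; s2; s3] (k %/ 15).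

Lemma mem_enum_block (k : nat) (x : Z15) : (x \in enum_block k) = in_block k x.
Proof. by rewrite mem_translate inE. Qed.

Lemma enum_blockE (j i : nat) :
  (i < 15)%N -> enum_block (j * 15 + i) = translate (base_set j) i%:R.
Proof.
move=> lt_i15; rewrite /enum_block divnMDl // divn_small // addn0 natrD natrM.
have Z15_char : (15%:R : Z15) = 0 by apply/val_inj.
by rewrite Z15_char mulr0 add0r.
Qed.

Lemma enum_block_lt (j : nat) (i : Z15) : (j < 2)%N -> (j * 15 + i < 35)%N.
Proof. by move=> lt_j2; have lt_i15 : (i < 15)%N := ltn_ord i; lia. Qed.

Hypothesis s3_periodic : all (fun y => y + 5%:R \in s3) s3.

Lemma cyclic_blocks_enum :
  cyclic_blocks [:: [set y in s1]; [set y in s2]; [set y in s3]] =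
  [set enum_block k | k : 'I_35].
Proof.
rewrite /cyclic_blocks !big_cons big_nil setU0; apply/eqP; rewrite eqEsubset.
apply/andP; split.
- rewrite !subUset; apply/and3P; split; apply/subsetP => _ /imsetP [i _ ->].
  + have lt_k : (0 * 15 + i < 35)%N by apply: enum_block_lt.
    by apply/imsetP; exists (Ordinal lt_k); rewrite //= enum_blockE // natr_Zp.
  + have lt_k : (1 * 15 + i < 35)%N by apply: enum_block_lt.
    by apply/imsetP; exists (Ordinal lt_k); rewrite //= enum_blockE // natr_Zp.
  + have lt_r5 : (i %% 5 < 5)%N by rewrite ltn_mod.
    have lt_k : (2 * 15 + i %% 5 < 35)%N by lia.
    apply/imsetP; exists (Ordinal lt_k) => //=; rewrite enum_blockE; last by lia.
    by apply: translate_mod; apply: translate_invariant.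
- apply/subsetP => _ /imsetP [k _ ->]; rewrite /enum_block.
  have: (k %/ 15 < 3)%N by have := ltn_ord k; lia.
  by case: (k %/ 15)%N => [|[|[|//]]] _; rewrite !in_setU imset_f ?orbT.
Qed.

Definition blocks_distinct : bool :=
  all (fun j => all (fun k => (j == k) ||
    has (fun x => in_block j x != in_block k x) points) (iota 0 35)) (iota 0 35).

Lemma enum_block_inj : blocks_distinct -> injective (fun k : 'I_35 => enum_block k).
Proof.
move=> /allP distinct j k /= jk; apply: val_inj => /=.
have /allP := distinct j (mem_iota_ord j).
case/(_ k (mem_iota_ord k))/orP => [/eqP // | /hasP [x _]].
by rewrite -!mem_enum_block jk eqxx.
Qed.

Definition flow_weights (v : seq int) : bool :=
  (size v == 35) && all (mem [:: 1; -1; 2; -2]) v.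

Definition balanced (v : seq int) : bool :=
  all (fun x => \sum_(0 <= k < 35 | in_block k x) v`_k == 0) points.

Theorem cyclic_STS15_flow (v : seq int) :
  blocks_distinct -> flow_weights v -> balanced v ->
  zero_sum_3flow (cyclic_blocks [:: [set y in s1]; [set y in s2]; [set y in s3]]).
Proof.
move=> distinct /andP [/eqP size_v /allP v_range] /allP v_balanced.
rewrite cyclic_blocks_enum.
apply: (flow_of_enumeration (w := fun k : 'I_35 => v`_k) (enum_block_inj distinct)).
  by move=> k; apply/v_range/mem_nth; rewrite size_v.
move=> x; apply/eqP; rewrite (eq_bigl (fun k : 'I_35 => in_block k x)).
  by rewrite -(big_mkord (in_block^~ x)); apply: v_balanced; apply: mem_points.
by move=> k; rewrite mem_enum_block.
Qed.

End CyclicSTS15.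

Lemma set3_seq (a b c : Z15) : [set a; b; c] = [set y in [:: a; b; c]].
Proof. by apply/setP => y; rewrite !inE orbA. Qed.

(* Flow values on the blocks of STS15_A, in the order of enum_block: the
   translates of {0,1,4}, of {0,2,8}, then of {0,5,10}. *)
Definition weights_A : seq int :=
  [:: -2; -2; -2; 1; -1; 1; 1; -2; -1; -2; -1; 1; 1; 1; -1;
       1; 2; 2; 1; 1; -1; 1; 1; 1; 1; -2; 1; 1; -1; 1;
       1; -1; -1; 1; -2].

Definition weights_B : seq int :=
  [:: 1; -1; 2; -2; 1; -1; -1; 2; 1; 1; -2; -2; 1; 1; 2;
      -2; 1; -1; -2; -1; 1; 1; -1; -1; 1; 1; 1; -1; -1; -2;
       1; 1; 2; -2; 1].

Theorem mainTheorem8 : zero_sum_3flow STS15_A /\ zero_sum_3flow STS15_B.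
Proof.
rewrite /STS15_A /STS15_B !set3_seq.
split; [apply: (@cyclic_STS15_flow _ _ _ _ weights_A)
       | apply: (@cyclic_STS15_flow _ _ _ _ weights_B)].
all: rewrite /balanced ?unlock; by vm_compute.
Qed.
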